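(* Let $\mathcal T=(\mathcal S,\to)$ be an LTS over $\Sigma$, $\mathcal V$ a valuation, $\Phi$ a fixpoint-free well-formed formula in positive normal form, and $S\subseteq\mathcal S$ with $S\subseteq[\![\Phi]\!]_{\mathcal V}$. Then there is a successful tableau in tableau normal form whose root is labelled by $S\vdash^{\mathcal T}_{\mathcal V,\varepsilon}\Phi$ ($\varepsilon$ the empty definition list).
   Context: Fix a set $\Sigma$ and a countably infinite set $\mathrm{Var}$ of variables. An LTS is $\mathcal T=(\mathcal S,\to)$ with ${\to}\subseteq\mathcal S\times\Sigma\times\mathcal S$; $s\xrightarrow{K}s'$ means $s\xrightarrow{a}s'$ for some $a\in K$. A valuation is $\mathcal V:\mathrm{Var}\to 2^{\mathcal S}$. Formulas: $\Phi::=Z\mid\neg\Phi\mid\Phi_1\wedge\Phi_2\mid[K]\Phi\mid\nu Z.\Phi$, well-formed if in each $\nu Z.\Phi$ every free occurrence of $Z$ in $\Phi$ is under an even number of negations. Derived: $\vee$, $\langle K\rangle\Phi=\neg[K]\neg\Phi$, $\mu Z.\Phi=\neg\nu Z.\neg\Phi[Z:=\neg Z]$. Semantics: $[\![Z]\!]_{\mathcal V}=\mathcal V(Z)$, negation = complement, $\wedge$ = intersection, $[\![[K]\Phi]\!]_{\mathcal V}=\{s\mid\forall s'.\ s\xrightarrow{K}s'\Rightarrow s'\in[\![\Phi]\!]_{\mathcal V}\}$, $[\![\nu Z.\Phi]\!]_{\mathcal V}=\bigcup\{S'\mid S'\subseteq[\![\Phi]\!]_{\mathcal V[Z:=S']}\}$.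 Positive normal form: built from $Z,\neg Z,\wedge,\vee,[K],\langle K\rangle,\nu,\mu$. A formula is fixpoint-free if it has no subformula of the form $\nu Z.\Psi$ or $\mu Z.\Psi$. Definition list $\Delta=(U_1=\Phi_1)\cdots(U_n=\Phi_n)$: distinct $U_i$, no $U_i$ bound in any $\Phi_j$, $U_j$ not free in $\Phi_i$ for $i\le j$. Sequent $S\vdash^{\mathcal T}_{\mathcal V,\Delta}\Phi$: $S\subseteq\mathcal S$, $\Phi$ in positive normal form, every $U\in\mathrm{dom}(\Delta)$ positive and not bound in $\Phi$. Rules (conclusion; premises): ($\wedge$) $S\vdash_\Delta\Phi_1\wedge\Phi_2$; $S\vdash_\Delta\Phi_1$, $S\vdash_\Delta\Phi_2$. ($\vee$) $S\vdash_\Delta\Phi_1\vee\Phi_2$; $S_1\vdash_\Delta\Phi_1$, $S_2\vdash_\Delta\Phi_2$, $S=S_1\cup S_2$. ($[K]$) $S\vdash_\Delta[K]\Phi$; $\{s'\mid\exists s\in S.\ s\xrightarrow{K}s'\}\vdash_\Delta\Phi$. ($\langle K\rangle$, witness $f:S\to\mathcal S$, $s\xrightarrow{K}f(s)$) $S\vdash_\Delta\langle K\rangle\Phi$; $f(S)\vdash_\Delta\Phi$. ($\sigma Z$) $S\vdash_\Delta\sigma Z.\Phi$; $S\vdash_{\Delta\cdot(U=\sigma Z.\Phi)}U$, $U$ fresh. (Un) $S\vdash_\Delta U$; $S\vdash_\Delta\Phi[Z:=U]$, $\Delta(U)=\sigma Z.\Phi$. (Thin) $S\vdash_\Delta\Phi$;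 $S'\vdash_\Delta\Phi$, $S\subseteq S'$. A tableau is a finite nonempty ordered tree of nodes labelled by sequents over $\mathcal T,\mathcal V$, each internal node labelled by a rule application (plus witness function for $\langle K\rangle$) forming a rule instance with its ordered children, whose root has empty definition list and whose leaves $n$ (sequent $S_n\vdash_\Delta\Phi$) are terminal: (a) $\Phi\in\{Z,\neg Z\}$, $Z\notin\mathrm{dom}(\Delta)$; (b) $\Phi=\langle K\rangle\Psi$ and some $s\in S_n$ has no $K$-successor (diamond leaf); (c) $\Phi=U\in\mathrm{dom}(\Delta)$ and some strict ancestor $m$ has formula $U$ with $S_n\subseteq S_m$ ($\mu$-/$\nu$-leaf according to $\Delta(U)$). Companion nodes: nodes with rule Un; companion leaves of $m$: leaves strictly below $m$ with the same formula and $S_n\subseteq S_m$, excluding companion leaves of companion nodes strictly below $m$. For a child $n'$ of $n$: $s'<_{n',n}s$ iff $s'\in S_{n'}$, $s\in S_n$ and (rule $[K]$, $s\xrightarrow{K}s'$) or (rule $(\langle K\rangle,f)$, $s'=f(s)$) or (other rule, $s'=s$). $\lessdot_{n',n}$ is least with $s\lessdot_{n,n}s$ and ($s'\lessdot_{n',m}s''$, $s''<_{m,n}s$)$\Rightarrow s'\lessdot_{n',n}s$. $<:_{n',n}$, $<:_m$ are least with: $s'<:_m s$ iff some companion leaf $m'$ of $m$ has $s'\in S_{m'}$, $s'<:_{m',m}s$; $s'<:_{n',n}s$ iff $s'\in S_{n'}$, $s\in S_n$, and $s'\lessdot_{n',n}s$ or some companion node $m\notin\{n,n'\}$ and $t,t'\in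 S_m$ satisfy $s'<:_{n',m}t'$, $t'(<:_m)^+t$, $t\lessdot_{m,n}s$. A leaf is successful iff: formula $Z$ and $S_n\subseteq\mathcal V(Z)$; or $\neg Z$ and $S_n\cap\mathcal V(Z)=\emptyset$; or $\nu$-leaf; or $\mu$-leaf whose companion node $m$ has $<:_m$ well-founded. A successful tableau has all leaves successful. Tableau normal form (TNF): the tableau is (i) thinning-restricted: the root's rule is not Thin, and for every non-root node $n$, the rule at $n$ is $\sigma Z$ iff the rule at the parent of $n$ is Thin; (ii) unfolding-limited: for each definitional constant $U$ appearing in the tableau there is exactly one node with formula $U$ and rule Un; (iii) irredundant: for each node with rule $\vee$ and children $n_1,n_2$, $S_{n_1}\cap S_{n_2}=\emptyset$. *)

From Stdlib Require Import List Relations PeanoNat.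
Import ListNotations.

Definition Var := nat.

Section MuCalc.

Context {Sig St : Type}.
Variable trans : St -> Sig -> St -> Prop.

Definition stset := St -> Prop.
Definition subset (A B : stset) : Prop := forall s, A s -> B s.
Definition seteq (A B : stset) : Prop := forall s, A s <-> B s.

Inductive form : Type :=
| FVar (Z : Var)
| FNeg (a : form)
| FAnd (a b : form)
| FBox (K : Sig -> Prop) (a : form)
| FNu (Z : Var) (a : form).

(** [occ odd Z a]: Z has a free occurrence in a under a number of negations
    whose parity is [odd] (true = odd). *)
Fixpoint occ (odd : bool) (Z : Var) (a : form) : Prop :=
  match a with
  | FVar Y => Y = Z /\ odd = false
  | FNeg b => occ (negb odd) Z b
  | FAnd b c => occ odd Z b \/ occ odd Z c
  | FBox _ b => occ odd Z b
  | FNu Y b => Y <> Z /\ occ odd Z b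
  end.

Fixpoint wf (a : form) : Prop :=
  match a with
  | FVar _ => True
  | FNeg b => wf b
  | FAnd b c => wf b /\ wf c
  | FBox _ b => wf b
  | FNu Z b => ~ occ true Z b /\ wf b
  end.

Fixpoint subst_neg (Z : Var) (a : form) : form :=
  match a with
  | FVar Y => if Nat.eqb Y Z then FNeg (FVar Z) else FVar Y
  | FNeg b => FNeg (subst_neg Z b)
  | FAnd b c => FAnd (subst_neg Z b) (subst_neg Z c)
  | FBox K b => FBox K (subst_neg Z b)
  | FNu Y b => if Nat.eqb Y Z then FNu Y b else FNu Y (subst_neg Z b)
  end.

Definition valuation := Var -> stset.
Definition upd (V : valuation) (Z : Var) (S' : stset) : valuation :=
  fun Y => if Nat.eqb Y Z then S' else V Y.

Fixpoint sem (V : valuation) (a : form) : stset :=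
  match a with
  | FVar Z => V Z
  | FNeg b => fun s => ~ sem V b s
  | FAnd b c => fun s => sem V b s /\ sem V c s
  | FBox K b => fun s => forall act s', K act -> trans s act s' -> sem V b s'
  | FNu Z b => fun s => exists S' : stset, S' s /\ subset S' (sem (upd V Z S') b)
  end.

Inductive pform : Type :=
| PVar (Z : Var)
| PNVar (Z : Var)
| PAnd (a b : pform)
| POr (a b : pform)
| PBox (K : Sig -> Prop) (a : pform)
| PDia (K : Sig -> Prop) (a : pform)
| PNu (Z : Var) (a : pform)
| PMu (Z : Var) (a : pform).

Fixpoint to_form (a : pform) : form :=
  match a with
  | PVar Z => FVar Z
  | PNVar Z => FNeg (FVar Z)
  | PAnd b c => FAnd (to_form b) (to_form c)
  | POr b c => FNeg (FAnd (FNeg (to_form b)) (FNeg (to_form c)))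
  | PBox K b => FBox K (to_form b)
  | PDia K b => FNeg (FBox K (FNeg (to_form b)))
  | PNu Z b => FNu Z (to_form b)
  | PMu Z b => FNeg (FNu Z (FNeg (subst_neg Z (to_form b))))
  end.

Fixpoint fixpoint_free (a : pform) : Prop :=
  match a with
  | PVar _ | PNVar _ => True
  | PAnd b c | POr b c => fixpoint_free b /\ fixpoint_free c
  | PBox _ b | PDia _ b => fixpoint_free b
  | PNu _ _ | PMu _ _ => False
  end.

Fixpoint bound (Z : Var) (a : pform) : Prop :=
  match a with
  | PVar _ | PNVar _ => False
  | PAnd b c | POr b c => bound Z b \/ bound Z c
  | PBox _ b | PDia _ b => bound Z b
  | PNu Y b | PMu Y b => Y = Z \/ bound Z b
  end.

Fixpoint free (Z : Var) (a : pform) : Prop :=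
  match a with
  | PVar Y | PNVar Y => Y = Z
  | PAnd b c | POr b c => free Z b \/ free Z c
  | PBox _ b | PDia _ b => free Z b
  | PNu Y b | PMu Y b => Y <> Z /\ free Z b
  end.

Definition occurs (Z : Var) (a : pform) : Prop := free Z a \/ bound Z a
  \/ (exists b, a = PNu Z b \/ a = PMu Z b).

Definition positive (U : Var) (a : pform) : Prop := ~ occ true U (to_form a).

Fixpoint psubst (Z U : Var) (a : pform) : pform :=
  match a with
  | PVar Y => if Nat.eqb Y Z then PVar U else PVar Y
  | PNVar Y => if Nat.eqb Y Z then PNVar U else PNVar Y
  | PAnd b c => PAnd (psubst Z U b) (psubst Z U c)
  | POr b c => POr (psubst Z U b) (psubst Z U c)
  | PBox K b => PBox K (psubst Z U b)
  | PDia K b => PDia K (psubst Z U b)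
  | PNu Y b => if Nat.eqb Y Z then PNu Y b else PNu Y (psubst Z U b)
  | PMu Y b => if Nat.eqb Y Z then PMu Y b else PMu Y (psubst Z U b)
  end.

Definition deflist := list (Var * pform).
Definition dom (D : deflist) : list Var := map fst D.

Fixpoint lookup (U : Var) (D : deflist) : option pform :=
  match D with
  | [] => None
  | (V', a) :: D' => if Nat.eqb V' U then Some a else lookup U D'
  end.

Definition is_fixpoint (a : pform) : Prop :=
  exists Z b, a = PNu Z b \/ a = PMu Z b.

Definition deflist_ok (D : deflist) : Prop :=
  NoDup (dom D)
  /\ (forall e, In e D -> is_fixpoint (snd e))
  /\ (forall U e, In U (dom D) -> In e D -> ~ bound U (snd e))
  /\ (forall i j ei ej, i <= j -> nth_error D i = Some ei -> nth_error D j = Some ej ->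
        ~ free (fst ej) (snd ei)).

Definition sequent_ok (D : deflist) (phi : pform) : Prop :=
  deflist_ok D /\ (forall U, In U (dom D) -> positive U phi /\ ~ bound U phi).

Definition fresh (U : Var) (D : deflist) (phi : pform) : Prop :=
  ~ In U (dom D) /\ ~ occurs U phi /\ (forall e, In e D -> ~ occurs U (snd e)).

Inductive rule : Type :=
| RAnd | ROr | RBox | RDia (f : St -> St) | RSig (U : Var) | RUn | RThin
| RLeaf (* marks a leaf: no rule applied *).

Inductive tab : Type :=
| TNode (S : stset) (D : deflist) (phi : pform) (r : rule) (ch : list tab).

Definition tS (t : tab) : stset := match t with TNode X _ _ _ _ => X end.
Definition tD (t : tab) : deflist := match t with TNode _ D _ _ _ => D end.
Definition tphi (t : tab) : pform := match t with TNode _ _ phi _ _ => phi end.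
Definition trule (t : tab) : rule := match t with TNode _ _ _ r _ => r end.
Definition tch (t : tab) : list tab := match t with TNode _ _ _ _ ch => ch end.

Definition rule_inst (S : stset) (D : deflist) (phi : pform) (r : rule) (ch : list tab) : Prop :=
  match r with
  | RAnd => exists a b c1 c2, phi = PAnd a b /\ ch = [c1; c2]
      /\ seteq (tS c1) S /\ tD c1 = D /\ tphi c1 = a
      /\ seteq (tS c2) S /\ tD c2 = D /\ tphi c2 = b
  | ROr => exists a b c1 c2, phi = POr a b /\ ch = [c1; c2]
      /\ tD c1 = D /\ tphi c1 = a /\ tD c2 = D /\ tphi c2 = b
      /\ seteq S (fun s => tS c1 s \/ tS c2 s)
  | RBox => exists K a c, phi = PBox K a /\ ch = [c] /\ tD c = D /\ tphi c = a
      /\ seteq (tS c) (fun s' => exists s act, S s /\ K act /\ trans s act s')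
  | RDia f => exists K a c, phi = PDia K a /\ ch = [c] /\ tD c = D /\ tphi c = a
      /\ (forall s, S s -> exists act, K act /\ trans s act (f s))
      /\ seteq (tS c) (fun s' => exists s, S s /\ s' = f s)
  | RSig U => exists c, is_fixpoint phi /\ fresh U D phi /\ ch = [c]
      /\ seteq (tS c) S /\ tD c = D ++ [(U, phi)] /\ tphi c = PVar U
  | RUn => exists U Z a c, phi = PVar U
      /\ (lookup U D = Some (PNu Z a) \/ lookup U D = Some (PMu Z a))
      /\ ch = [c] /\ seteq (tS c) S /\ tD c = D /\ tphi c = psubst Z U a
  | RThin => exists c, ch = [c] /\ tD c = D /\ tphi c = phi /\ subset S (tS c)
  | RLeaf => False
  end.

Definition path := list nat.

Fixpoint at_path (t : tab) (p : path) : option tab :=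
  match p with
  | [] => Some t
  | i :: p' => match nth_error (tch t) i with
               | Some c => at_path c p'
               | None => None
               end
  end.

Definition is_node (t : tab) (p : path) : Prop := at_path t p <> None.
Definition nS (t : tab) (p : path) : stset :=
  fun s => match at_path t p with Some n => tS n s | None => False end.
Definition nD (t : tab) (p : path) : option deflist := option_map tD (at_path t p).
Definition nphi (t : tab) (p : path) : option pform := option_map tphi (at_path t p).
Definition nrule (t : tab) (p : path) : option rule := option_map trule (at_path t p).
Definition is_leaf (t : tab) (p : path) : Prop :=
  exists n, at_path t p = Some n /\ tch n = [].

Definition strict_anc (m n : path) : Prop := exists q, q <> [] /\ n = m ++ q.

Definition term_a (D : deflist) (phi : pform) : Prop :=
  exists Z, (phi = PVar Z \/ phi = PNVar Z) /\ ~ In Z (dom D).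
Definition term_b (S : stset) (phi : pform) : Prop :=
  exists K a, phi = PDia K a /\ exists s, S s /\ ~ (exists act s', K act /\ trans s act s').
Definition term_c (t : tab) (p : path) (S : stset) (D : deflist) (phi : pform) : Prop :=
  exists U, phi = PVar U /\ In U (dom D)
    /\ exists m, strict_anc m p /\ nphi t m = Some (PVar U) /\ subset S (nS t m).

Definition terminal (t : tab) (p : path) : Prop :=
  exists n, at_path t p = Some n /\
    (term_a (tD n) (tphi n) \/ term_b (tS n) (tphi n) \/ term_c t p (tS n) (tD n) (tphi n)).

Definition is_tableau (t : tab) : Prop :=
  tD t = []
  /\ (forall p n, at_path t p = Some n -> sequent_ok (tD n) (tphi n))
  /\ (forall p n, at_path t p = Some n ->
        (tch n = [] /\ trule n = RLeaf /\ terminal t p)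
        \/ (tch n <> [] /\ rule_inst (tS n) (tD n) (tphi n) (trule n) (tch n))).

Definition companion (t : tab) (m : path) : Prop := nrule t m = Some RUn.

Definition cand_leaf (t : tab) (m n : path) : Prop :=
  companion t m /\ is_leaf t n /\ strict_anc m n
  /\ nphi t n = nphi t m /\ subset (nS t n) (nS t m).

(** Companion leaves of m: candidate leaves of m that are not companion leaves
    of a companion node strictly below m (equivalently, of the nearest one). *)
Definition comp_leaf (t : tab) (m n : path) : Prop :=
  cand_leaf t m n /\
  forall m', strict_anc m m' -> strict_anc m' n -> ~ cand_leaf t m' n.

Definition lt_step (t : tab) (n' n : path) (s' s : St) : Prop :=
  (exists i, n' = n ++ [i]) /\ is_node t n' /\ nS t n' s' /\ nS t n s /\
  match nrule t n, nphi t n with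
  | Some RBox, Some (PBox K _) => exists act, K act /\ trans s act s'
  | Some (RDia f), _ => s' = f s
  | _, _ => s' = s
  end.

Inductive dot (t : tab) : path -> path -> St -> St -> Prop :=
| dot_refl n s : dot t n n s s
| dot_step n' m n s' s'' s : dot t n' m s' s'' -> lt_step t m n s'' s -> dot t n' n s' s.

Inductive ext (t : tab) : path -> path -> St -> St -> Prop :=
| ext_dot n' n s' s : nS t n' s' -> nS t n s -> dot t n' n s' s -> ext t n' n s' s
| ext_comp n' n m s' s u u' : nS t n' s' -> nS t n s ->
    companion t m -> m <> n -> m <> n' -> nS t m u -> nS t m u' ->
    ext t n' m s' u' -> compplus t m u' u -> dot t m n u s -> ext t n' n s' s
with comp (t : tab) : path -> St -> St -> Prop :=
| comp_intro m m' s' s : comp_leaf t m m' -> nS t m' s' -> ext t m' m s' s -> comp t m s' s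
with compplus (t : tab) : path -> St -> St -> Prop :=
| cp_one m a b : comp t m a b -> compplus t m a b
| cp_step m a b c : comp t m a b -> compplus t m b c -> compplus t m a c.

Definition leaf_success (V : valuation) (t : tab) (p : path) : Prop :=
  exists n, at_path t p = Some n /\
  ( (exists Z, tphi n = PVar Z /\ ~ In Z (dom (tD n)) /\ subset (tS n) (V Z))
  \/ (exists Z, tphi n = PNVar Z /\ ~ In Z (dom (tD n)) /\ (forall s, tS n s -> ~ V Z s))
  \/ (exists U Z a, tphi n = PVar U /\ lookup U (tD n) = Some (PNu Z a)
        /\ term_c t p (tS n) (tD n) (tphi n))
  \/ (exists U Z a, tphi n = PVar U /\ lookup U (tD n) = Some (PMu Z a)
        /\ term_c t p (tS n) (tD n) (tphi n)
        /\ exists m, comp_leaf t m p /\ well_founded (comp t m)) ).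

Definition successful (V : valuation) (t : tab) : Prop :=
  is_tableau t /\ forall p, is_leaf t p -> leaf_success V t p.

Definition is_sig_rule (r : rule) : Prop := exists U, r = RSig U.

Definition thinning_restricted (t : tab) : Prop :=
  trule t <> RThin /\
  forall p i r, nrule t (p ++ [i]) = Some r ->
    (is_sig_rule r <-> nrule t p = Some RThin).

Definition unfolding_limited (t : tab) : Prop :=
  forall U, (exists p D, nD t p = Some D /\ In U (dom D)) ->
    exists! p, nphi t p = Some (PVar U) /\ nrule t p = Some RUn.

Definition irredundant (t : tab) : Prop :=
  forall p, nrule t p = Some ROr ->
    forall s, ~ (nS t (p ++ [0]) s /\ nS t (p ++ [1]) s).

Definition TNF (t : tab) : Prop :=
  thinning_restricted t /\ unfolding_limited t /\ irredundant t.

End MuCalc.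

(* A fixpoint-free formula needs no definitional constants, so a tableau can be
   built by structural recursion on the formula: a conjunction keeps the set, a
   disjunction splits it according to the meaning of the left disjunct (which
   makes every Or-node irredundant), a box passes to all K-successors and a
   diamond follows a chosen K-successor satisfying the subformula. The set at
   every node stays inside the meaning of its formula, so the leaves are
   literals whose sets are correct; and the tableau has no Thin, sigma or Un
   nodes, so it is trivially in normal form. *)
From Stdlib Require Import List Classical ClassicalEpsilon.
Import ListNotations.

Lemma tab_eta {Sig St : Type} (t : @tab Sig St) :
  t = TNode (tS t) (tD t) (tphi t) (trule t) (tch t).
Proof. now destruct t. Qed.

Lemma at_path_app {Sig St : Type} (t : @tab Sig St) p q :
  at_path t (p ++ q) = match at_path t p with Some n => at_path n q | None => None end.
Proof.
  revert t; induction p as [|i p IH]; intro t; simpl; [reflexivity|].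
  now destruct (nth_error (tch t) i).
Qed.

Lemma at_path_snoc {Sig St : Type} (t : @tab Sig St) p i :
  at_path t (p ++ [i]) =
  match at_path t p with Some n => nth_error (tch n) i | None => None end.
Proof.
  rewrite at_path_app. destruct (at_path t p) as [n|]; simpl; [|reflexivity].
  now destruct (nth_error (tch n) i).
Qed.

Lemma at_path_ind {Sig St : Type} (P : @tab Sig St -> Prop) :
  (forall t c, P t -> In c (tch t) -> P c) ->
  forall p t n, P t -> at_path t p = Some n -> P n.
Proof.
  intros Hch p; induction p as [|i p IH]; intros t n Ht Hp; simpl in Hp.
  - now injection Hp as <-.
  - destruct (nth_error (tch t) i) as [c|] eqn:Hc; [|discriminate].
    apply (IH c); [|exact Hp].
    exact (Hch t c Ht (nth_error_In _ _ Hc)).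
Qed.

Lemma sequent_ok_nil {Sig : Type} (phi : @pform Sig) : sequent_ok [] phi.
Proof.
  split; [|intros U []].
  repeat split; [constructor | intros e [] | intros U e [] |].
  intros [|i] j ei ej _ Hi; discriminate.
Qed.

Section FixpointFreeTableau.

Context {Sig St : Type}.
Variable trans : St -> Sig -> St -> Prop.
Variable V : Var -> St -> Prop.

Local Notation holds a := (sem trans V (to_form a)).

Definition dia_succ (K : Sig -> Prop) (a : pform) (s s' : St) : Prop :=
  exists act, K act /\ trans s act s' /\ holds a s'.

Lemma holds_dia K a s : holds (PDia K a) s -> exists s', dia_succ K a s s'.
Proof.
  simpl; intro H. apply NNPP; intro Hno. apply H.
  intros act s' HK Ht Ha. apply Hno. now exists s', act.
Qed.

(* Falls back to [s] itself when [s] has no suitable successor; this value is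
   never used, since the sets reaching a diamond lie inside its meaning. *)
Definition dia_witness (K : Sig -> Prop) (a : pform) (s : St) : St :=
  match excluded_middle_informative (exists s', dia_succ K a s s') with
  | left h => proj1_sig (constructive_indefinite_description _ h)
  | right _ => s
  end.

Lemma dia_witnessP K a s : holds (PDia K a) s -> dia_succ K a s (dia_witness K a s).
Proof.
  intro H. unfold dia_witness. destruct excluded_middle_informative as [h|h].
  - exact (proj2_sig (constructive_indefinite_description _ h)).
  - exact (False_ind _ (h (holds_dia K a s H))).
Qed.

Fixpoint ff_tableau (phi : pform) (S : stset) : tab :=
  match phi with
  | PAnd a b => TNode S [] phi RAnd [ff_tableau a S; ff_tableau b S]
  | POr a b => TNode S [] phi ROr
      [ff_tableau a (fun s => S s /\ holds a s);
       ff_tableau b (fun s => S s /\ ~ holds a s)]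
  | PBox K a => TNode S [] phi RBox
      [ff_tableau a (fun s' => exists s act, S s /\ K act /\ trans s act s')]
  | PDia K a => TNode S [] phi (RDia (dia_witness K a))
      [ff_tableau a (fun s' => exists s, S s /\ s' = dia_witness K a s)]
  | _ => TNode S [] phi RLeaf []
  end.

Lemma tS_ff_tableau phi S : tS (ff_tableau phi S) = S.
Proof. now destruct phi. Qed.

Lemma tD_ff_tableau phi S : tD (ff_tableau phi S) = [].
Proof. now destruct phi. Qed.

Lemma tphi_ff_tableau phi S : tphi (ff_tableau phi S) = phi.
Proof. now destruct phi. Qed.

Lemma trule_ff_tableau_neq_thin phi S : trule (ff_tableau phi S) <> RThin.
Proof. now destruct phi. Qed.

Lemma trule_ff_tableau_not_sig phi S : ~ is_sig_rule (trule (ff_tableau phi S)).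
Proof. intros [U HU]. now destruct phi. Qed.

Lemma ff_tableau_or_disjoint phi S :
  trule (ff_tableau phi S) = ROr ->
  exists c1 c2, tch (ff_tableau phi S) = [c1; c2] /\ forall s, ~ (tS c1 s /\ tS c2 s).
Proof.
  destruct phi as [| | |a b| | | |]; try discriminate; intros _.
  do 2 eexists; split; [reflexivity|].
  rewrite !tS_ff_tableau; tauto.
Qed.

Definition ff_node (t : tab) : Prop := exists phi S, t = ff_tableau phi S.

Lemma ff_node_at_path phi S p n : at_path (ff_tableau phi S) p = Some n -> ff_node n.
Proof.
  apply (at_path_ind ff_node); [|now exists phi, S].
  intros t c [psi [S' ->]] Hc.
  destruct psi; simpl in Hc; repeat destruct Hc as [<-|Hc]; try contradiction;
    eexists; eexists; reflexivity.
Qed.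

Definition sound_node (t : tab) : Prop :=
  exists phi S, t = ff_tableau phi S /\ fixpoint_free phi /\ subset S (holds phi).

Lemma sound_node_child t c : sound_node t -> In c (tch t) -> sound_node c.
Proof.
  intros (psi & S & -> & Hff & HS) Hc.
  destruct psi as [| |a b|a b|K a|K a| |]; simpl in Hff, Hc; try contradiction;
    repeat destruct Hc as [<-|Hc]; try contradiction;
    do 2 eexists; (split; [reflexivity|]);
    try (split; [tauto|]); try (split; [exact Hff|]).
  - intros s Hs. exact (proj1 (HS s Hs)).
  - intros s Hs. exact (proj2 (HS s Hs)).
  - intros s [_ Ha]. exact Ha.
  - intros s [Hs Hna]. specialize (HS s Hs); simpl in HS. tauto.
  - intros s' (s & act & Hs & HK & Ht). exact (HS s Hs act s' HK Ht).
  - intros s' (s & Hs & ->). now destruct (dia_witnessP K a s (HS s Hs)) as (act & _ & _ & Ha).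
Qed.

Lemma sound_node_at_path phi S p n :
  fixpoint_free phi -> subset S (holds phi) ->
  at_path (ff_tableau phi S) p = Some n -> sound_node n.
Proof.
  intros Hff HS. apply (at_path_ind sound_node sound_node_child).
  now exists phi, S.
Qed.

Lemma sound_node_leaf n :
  sound_node n -> tch n = [] ->
  trule n = RLeaf /\ exists Z,
    (tphi n = PVar Z /\ subset (tS n) (V Z)) \/
    (tphi n = PNVar Z /\ forall s, tS n s -> ~ V Z s).
Proof.
  intros (psi & S & -> & Hff & HS) Hleaf.
  destruct psi as [Z|Z| | | | | |]; simpl in *; try discriminate; try contradiction;
    split; try reflexivity; exists Z; [left | right]; split; auto.
Qed.

Lemma sound_node_rule_inst n :
  sound_node n -> tch n <> [] ->
  rule_inst trans (tS n) (tD n) (tphi n) (trule n) (tch n).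
Proof.
  intros (psi & S & -> & Hff & HS) Hint.
  destruct psi as [| |a b|a b|K a|K a| |]; simpl in *; try contradiction.
  - do 4 eexists. rewrite !tS_ff_tableau, !tD_ff_tableau, !tphi_ff_tableau.
    repeat split; easy.
  - do 4 eexists. rewrite !tS_ff_tableau, !tD_ff_tableau, !tphi_ff_tableau.
    repeat split; try reflexivity; [|tauto].
    destruct (classic (holds a s)); tauto.
  - do 3 eexists. rewrite tS_ff_tableau, tD_ff_tableau, tphi_ff_tableau.
    repeat split; easy.
  - do 3 eexists. rewrite tS_ff_tableau, tD_ff_tableau, tphi_ff_tableau.
    repeat split; try easy.
    intros s Hs. destruct (dia_witnessP K a s (HS s Hs)) as (act & HK & Ht & _).
    now exists act.
Qed.

Lemma ff_tableau_is_tableau phi S :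
  fixpoint_free phi -> subset S (holds phi) -> is_tableau trans (ff_tableau phi S).
Proof.
  intros Hff HS. split; [apply tD_ff_tableau|split].
  - intros p n Hp. destruct (ff_node_at_path _ _ _ _ Hp) as (psi & S' & ->).
    rewrite tD_ff_tableau. apply sequent_ok_nil.
  - intros p n Hp. pose proof (sound_node_at_path _ _ _ _ Hff HS Hp) as Hn.
    assert (Hcases : tch n = [] \/ tch n <> []) by (destruct (tch n); [left|right]; easy).
    destruct Hcases as [Hch|Hch]; [left | right].
    + destruct (sound_node_leaf n Hn Hch) as [Hr [Z HZ]].
      split; [exact Hch|]. split; [exact Hr|]. exists n; split; [exact Hp|].
      left. exists Z. destruct (ff_node_at_path _ _ _ _ Hp) as (psi & S' & ->).
      rewrite tD_ff_tableau. split; [|intros []].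
      destruct HZ as [[-> _]|[-> _]]; auto.
    + split; [exact Hch|]. exact (sound_node_rule_inst n Hn Hch).
Qed.

Lemma ff_tableau_successful phi S :
  fixpoint_free phi -> subset S (holds phi) -> successful trans V (ff_tableau phi S).
Proof.
  intros Hff HS. split; [now apply ff_tableau_is_tableau|].
  intros p (n & Hp & Hleaf). exists n; split; [exact Hp|].
  destruct (sound_node_leaf n (sound_node_at_path _ _ _ _ Hff HS Hp) Hleaf)
    as [_ [Z [[HZ HV]|[HZ HV]]]];
    destruct (ff_node_at_path _ _ _ _ Hp) as (psi & S' & ->);
    rewrite tD_ff_tableau in *; [left | right; left]; exists Z; auto.
Qed.

Lemma ff_tableau_TNF phi S : TNF (ff_tableau phi S).
Proof.
  split; [split|split].
  - apply trule_ff_tableau_neq_thin.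
  - intros p i r Hr. unfold nrule in *. rewrite at_path_snoc in Hr.
    destruct (at_path _ p) as [m|] eqn:Hm; [|discriminate].
    destruct (nth_error (tch m) i) as [c|] eqn:Hc; [|discriminate].
    injection Hr as <-.
    destruct (ff_node_at_path _ _ _ _ Hm) as (psi & S' & ->).
    assert (Hcp : at_path (ff_tableau phi S) (p ++ [i]) = Some c)
      by now rewrite at_path_snoc, Hm.
    destruct (ff_node_at_path _ _ _ _ Hcp) as (psi' & S'' & ->).
    split; intro H; [now apply trule_ff_tableau_not_sig in H|].
    injection H as H. now apply trule_ff_tableau_neq_thin in H.
  - intros U (p & D & HD & HU). unfold nD in HD.
    destruct (at_path _ p) as [n|] eqn:Hp; [|discriminate]. injection HD as <-.
    destruct (ff_node_at_path _ _ _ _ Hp) as (psi & S' & ->).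
    now rewrite tD_ff_tableau in HU.
  - intros p Hr s [H0 H1]. unfold nrule, nS in *. rewrite !at_path_snoc in *.
    destruct (at_path _ p) as [n|] eqn:Hp; [|discriminate]. injection Hr as Hr.
    destruct (ff_node_at_path _ _ _ _ Hp) as (psi & S' & ->).
    destruct (ff_tableau_or_disjoint psi S' Hr) as (c1 & c2 & Hch & Hdisj).
    rewrite Hch in H0, H1. exact (Hdisj s (conj H0 H1)).
Qed.

End FixpointFreeTableau.

Theorem lemma42 (Sig St : Type) (trans : St -> Sig -> St -> Prop)
  (V : Var -> St -> Prop) (phi : @pform Sig) (S : St -> Prop) :
  wf (to_form phi) -> fixpoint_free phi ->
  (forall s, S s -> sem trans V (to_form phi) s) ->
  exists (r : @rule St) (ch : list (@tab Sig St)),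
    successful trans V (TNode S [] phi r ch) /\ TNF (TNode S [] phi r ch).
Proof.
  intros _ Hff HS.
  set (t := ff_tableau trans V phi S).
  exists (trule t), (tch t).
  replace (TNode S [] phi (trule t) (tch t)) with t
    by (rewrite (tab_eta t) at 1; unfold t;
        now rewrite tS_ff_tableau, tD_ff_tableau, tphi_ff_tableau).
  split; [exact (ff_tableau_successful trans V phi S Hff HS) | apply ff_tableau_TNF].
Qed.
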